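(* Let $K$ be a square with edges parallel to the coordinate axes and $k\ge1$ an integer. Let $V(K)=\mathcal Q_k(K)$, $\bm W(K)=[\mathcal Q_k(K)]^2$, and $\bm M(\partial K)=\{\bm\mu:\bm\mu|_F=\bm n\times p_k\text{ for some }p_k\in\mathcal P_k(F),\text{ for each edge }F\subset\partial K\}$. Then $I_M(V(K)\times\bm W(K))=2$.
   Context: $\mathcal Q_k$ denotes polynomials in two variables of degree at most $k$ in each variable; $\mathcal P_k(F)$ polynomials of degree at most $k$ on the edge $F$. Conventions in 2D: $\nabla\times\bm v=-\partial_yv_1+\partial_xv_2$, $\nabla\times p=(\partial_yp,-\partial_xp)^T$, $\bm n\times\bm v=-n_2v_1+n_1v_2$, $\bm n\times p=(n_2p,-n_1p)^T$, $\bm n\times\bm w\times\bm n:=\bm w-(\bm w\cdot\bm n)\bm n$, $\bm n$ the unit outward normal. $I_M(V(K)\times\bm W(K)):=\dim\bm M(\partial K)-\dim\{\bm n\times v|_{\partial K}:v\in V(K),\nabla\times v=\bm0\}-\dim\{\bm n\times\bm w\times\bm n|_{\partial K}:\bm w\in\bm W(K),\nabla\times\bm w=0\}$. *)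

From HB Require Import structures.
From mathcomp Require Import all_boot all_order all_algebra.
Set Implicit Arguments. Unset Strict Implicit. Unset Printing Implicit Defensive.
Import Order.TTheory GRing.Theory Num.Theory.
Local Open Scope ring_scope.

Section Defs.
Variable R : realFieldType.

(* A polynomial in two variables x, y is p : {poly {poly R}},
   p = \sum_j p_j(x) Y^j ; its value at (x,y) is p.[y%:P].[x]. *)
Definition ev2 (p : {poly {poly R}}) (x y : R) : R := (p.[y%:P]).[x].

Definition dx (p : {poly {poly R}}) : {poly {poly R}} := map_poly deriv p.
Definition dy (p : {poly {poly R}}) : {poly {poly R}} := deriv p.

Definition Qk (k : nat) (p : {poly {poly R}}) : Prop :=
  (size p <= k.+1)%N /\ forall j : nat, (size (p`_j)%R <= k.+1)%N.

Definition vec2 (u1 u2 : R) : 'rV[R]_2 :=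
  \row_(i < 2) (if i == ord0 then u1 else u2).
Definition c1 (v : 'rV[R]_2) : R := v ord0 ord0.
Definition c2 (v : 'rV[R]_2) : R := v ord0 (lift ord0 ord0).

(* Square K = [a, a+h] x [b, b+h]; edges numbered
   0 : bottom (y = b), 1 : right (x = a+h), 2 : top (y = b+h), 3 : left (x = a). *)
Definition on_edge (a b h : R) (i : 'I_4) (x y : R) : Prop :=
  match nat_of_ord i with
  | 0%N => y = b /\ a <= x <= a + h
  | 1%N => x = a + h /\ b <= y <= b + h
  | 2%N => y = b + h /\ a <= x <= a + h
  | _ => x = a /\ b <= y <= b + h
  end.

Definition normal (i : 'I_4) : 'rV[R]_2 :=
  match nat_of_ord i with
  | 0%N => vec2 0 (-1)
  | 1%N => vec2 1 0
  | 2%N => vec2 0 1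
  | _ => vec2 (-1) 0
  end.

(* the free coordinate along edge i (parametrizes P_k(F)) *)
Definition edge_coord (i : 'I_4) (x y : R) : R :=
  match nat_of_ord i with
  | 0%N => x | 1%N => y | 2%N => x | _ => y
  end.

(* Boundary functions: functions on the disjoint union of the four closed
   edges, i.e. on ('I_4 * (R * R)), considered only on the points
   (i,(x,y)) with on_edge i x y. *)
Definition bpt := ('I_4 * (R * R))%type.
Definition onbd (a b h : R) (z : bpt) : Prop := on_edge a b h z.1 z.2.1 z.2.2.

Definition ncross_s (n : 'rV[R]_2) (p : R) : 'rV[R]_2 := vec2 (c2 n * p) (- c1 n * p).
(* n x w x n = w - (w.n) n *)
Definition ntan (n w : 'rV[R]_2) : 'rV[R]_2 := w - (c1 w * c1 n + c2 w * c2 n) *: n.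

(* dim of a set S of functions X -> 'rV_2, taken after restriction to D:
   there is a basis of n elements of S, linearly independent on D,
   such that every element of S agrees on D with a linear combination. *)
Definition has_dim_on (X : Type) (D : X -> Prop) (S : (X -> 'rV[R]_2) -> Prop) (n : nat) : Prop :=
  exists e : 'I_n -> X -> 'rV[R]_2,
    (forall i, S (e i)) /\
    (forall c : 'I_n -> R, (forall z, D z -> \sum_(i < n) c i *: e i z = 0) -> forall i, c i = 0) /\
    (forall f, S f -> exists c : 'I_n -> R, forall z, D z -> f z = \sum_(i < n) c i *: e i z).

Definition Mspace (k : nat) (f : bpt -> 'rV[R]_2) : Prop :=
  exists p : 'I_4 -> {poly R}, (forall i, (size (p i) <= k.+1)%N) /\
    forall z : bpt, f z = ncross_s (normal z.1) (p z.1).[edge_coord z.1 z.2.1 z.2.2].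

(* { n x v |_dK : v in Q_k, curl v = 0 }, curl v = (d_y v, - d_x v) *)
Definition Vtraces (k : nat) (f : bpt -> 'rV[R]_2) : Prop :=
  exists v : {poly {poly R}}, Qk k v /\ dy v = 0 /\ dx v = 0 /\
    forall z : bpt, f z = ncross_s (normal z.1) (ev2 v z.2.1 z.2.2).

(* { n x w x n |_dK : w in [Q_k]^2, curl w = - d_y w1 + d_x w2 = 0 } *)
Definition Wtraces (k : nat) (f : bpt -> 'rV[R]_2) : Prop :=
  exists w1 w2 : {poly {poly R}}, Qk k w1 /\ Qk k w2 /\ dx w2 - dy w1 = 0 /\
    forall z : bpt, f z = ntan (normal z.1) (vec2 (ev2 w1 z.2.1 z.2.2) (ev2 w2 z.2.1 z.2.2)).

Definition I_M_eq (a b h : R) (k : nat) (m : int) : Prop :=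
  exists dM dV dW : nat,
    has_dim_on (onbd a b h) (Mspace k) dM /\
    has_dim_on (onbd a b h) (Vtraces k) dV /\
    has_dim_on (onbd a b h) (Wtraces k) dW /\
    (dM%:Z - dV%:Z - dW%:Z = m)%R.

End Defs.

(* A field of M(dK) is an arbitrary polynomial of degree <= k on each edge, so
   dim M(dK) = 4(k+1).  A curl-free v in Q_k is constant, so the traces n x v form
   a line.  A curl-free w in [Q_k]^2 is the gradient of a polynomial potential
   whose monomials, in s = x - a and t = y - b, are those of Q_k together with
   s^(k+1) and t^(k+1), and the tangential trace of w is the tangential derivative
   of the potential.  On dK one of s, t equals 0 or h, so the trace of a mixed
   monomial s^(p+1) t^(q+1) reduces to those of s^(p+1) t, s t^(q+1) and s t;
   hence the traces of the gradients of s^(p+1), t^(q+1) (p, q <= k), s^(p+1) t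
   (p < k) and s t^(q+2) (q < k - 1) span the tangential traces.  Restricting to
   the bottom, left, right and top edges in turn shows that they are independent,
   so I_M = 4(k+1) - 1 - (4k+1) = 2. *)

From mathcomp Require Import all_boot all_order all_algebra.
From mathcomp Require Import zify ring lra.
Import Order.TTheory GRing.Theory Num.Theory.
Local Open Scope ring_scope.
Set Implicit Arguments. Unset Strict Implicit. Unset Printing Implicit Defensive.

Section Preliminaries.
Variable R : realFieldType.

Lemma poly_eq0_on_interval (a h : R) (p : {poly R}) :
  0 < h -> (forall x, a <= x <= a + h -> p.[x] = 0) -> p = 0.
Proof.
move=> h_gt0 p_eq0; apply/eqP; apply: contraT => p_neq0.
set n := size p.
have n_gt0 : (0 < n)%N by rewrite lt0n size_poly_eq0.
have n_gt0R : 0 < (n%:R : R) by rewrite ltr0n.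
pose node i : R := a + h * (i%:R / n%:R).
have : (size (mkseq node n) < n)%N.
  apply: max_poly_roots => //.
  - apply/allP => x /mapP [i]; rewrite mem_iota add0n => /andP [_ lt_in] ->.
    apply/rootP/p_eq0.
    have ge0 : 0 <= h * (i%:R / n%:R) by rewrite mulr_ge0 ?divr_ge0 ?ler0n ?ltW.
    have leh : h * (i%:R / n%:R) <= h.
      apply: ler_piMr; first exact: ltW.
      by rewrite ler_pdivrMr // mul1r ler_nat ltnW.
    rewrite /node; lra.
  - apply/mkseq_uniqP => i j _ _ /addrI /(mulfI (lt0r_neq0 h_gt0)).
    by move/(mulIf (invr_neq0 (lt0r_neq0 n_gt0R)))/eqP; rewrite eqr_nat => /eqP.
by rewrite size_mkseq ltnn.
Qed.

Lemma coef_eq0_on_interval (a h : R) (n : nat) (g : 'I_n -> R) :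
  0 < h -> (forall x, a <= x <= a + h -> \sum_(i < n) g i * x ^+ i = 0) ->
  forall i, g i = 0.
Proof.
move=> h_gt0 sum_eq0 i.
have P_eq0 : \sum_(j < n) g j *: 'X^j = 0 :> {poly R}.
  apply: (poly_eq0_on_interval h_gt0) => x /sum_eq0 <-.
  by rewrite horner_sum; apply: eq_bigr => j _; rewrite hornerZ hornerXn.
have := congr1 (fun p : {poly R} => p`_i) P_eq0.
by rewrite coef_sumMXn coef0 (big_pred1 i).
Qed.

Lemma vec2_eq0 (u v : R) : (vec2 u v == 0) = (u == 0) && (v == 0).
Proof.
apply/eqP/andP => [uv0|[/eqP-> /eqP->]]; last by apply/rowP => i; rewrite !mxE; case: ifP.
by split; apply/eqP; [move/(congr1 (@c1 R)): uv0 | move/(congr1 (@c2 R)): uv0];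
  rewrite /c1 /c2 !mxE.
Qed.

Lemma vec2Z (c u v : R) : c *: vec2 u v = vec2 (c * u) (c * v).
Proof. by apply/rowP => i; rewrite !mxE; case: ifP. Qed.

Lemma vec2_sum (I : Type) (r : seq I) (u v : I -> R) :
  \sum_(i <- r) vec2 (u i) (v i) = vec2 (\sum_(i <- r) u i) (\sum_(i <- r) v i).
Proof.
by apply/rowP => j; rewrite summxE !mxE; case: ifP => j0;
  apply: eq_bigr => i _; rewrite mxE j0.
Qed.

Definition tangential (e : 'I_4) (u v : R) : 'rV[R]_2 :=
  if odd e then vec2 0 v else vec2 u 0.

Lemma ntan_normal (e : 'I_4) (u v : R) : ntan (normal R e) (vec2 u v) = tangential e u v.
Proof.
rewrite /ntan /tangential /c1 /c2.
by case: e => [[|[|[|[|//]]]] ?]; apply/rowP => i; rewrite /normal !mxE /=;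
  case: ifP => _; ring.
Qed.

Lemma tangentialZ (e : 'I_4) (c u v : R) :
  c *: tangential e u v = tangential e (c * u) (c * v).
Proof. by rewrite /tangential; case: ifP => _; rewrite vec2Z mulr0. Qed.

Lemma tangentialD (e : 'I_4) (u v u' v' : R) :
  tangential e u v + tangential e u' v' = tangential e (u + u') (v + v').
Proof.
by rewrite /tangential; case: ifP => _; apply/rowP => i; rewrite !mxE; case: ifP; rewrite ?addr0.
Qed.

Lemma tangential_sum (e : 'I_4) (I : Type) (r : seq I) (u v : I -> R) :
  \sum_(i <- r) tangential e (u i) (v i) =
  tangential e (\sum_(i <- r) u i) (\sum_(i <- r) v i).
Proof. by rewrite /tangential; case: ifP => _; rewrite vec2_sum big1_eq. Qed.

Lemma tangential_eq0 (e : 'I_4) (u v : R) :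
  tangential e u v = 0 -> if odd e then v = 0 else u = 0.
Proof. by rewrite /tangential; case: ifP => _ /eqP; rewrite vec2_eq0 => /andP[/eqP ? /eqP ?]. Qed.

Lemma ncross_sE (n : 'rV[R]_2) (p : R) : ncross_s n p = p *: ncross_s n 1.
Proof. by rewrite /ncross_s vec2Z !mulr1 mulrC [_ * - _]mulrC. Qed.

Lemma ncross_normal_neq0 (e : 'I_4) : ncross_s (normal R e) 1 != 0.
Proof.
rewrite /ncross_s vec2_eq0 /c1 /c2.
by case: e => [[|[|[|[|//]]]] ?];
  rewrite /normal !mxE /= !mulr1 ?oppr0 ?opprK ?oppr_eq0 ?oner_eq0 ?andbF.
Qed.

End Preliminaries.

Section Bases.
Variables (R : realFieldType) (X : Type) (D : X -> Prop).
Variables (T : finType) (g : T -> X -> 'rV[R]_2).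

Definition span_on (f : X -> 'rV[R]_2) : Prop :=
  exists c : T -> R, forall z, D z -> f z = \sum_x c x *: g x z.

Definition free_on : Prop :=
  forall c : T -> R, (forall z, D z -> \sum_x c x *: g x z = 0) -> forall x, c x = 0.

Lemma span_on_ext f f' : (forall z, D z -> f z = f' z) -> span_on f' -> span_on f.
Proof. by move=> ff' [c f'E]; exists c => z Dz; rewrite ff' // f'E. Qed.

Lemma span_on0 : span_on (fun=> 0).
Proof. by exists (fun=> 0) => z _; rewrite big1 // => x _; rewrite scale0r. Qed.

Lemma span_onD f f' : span_on f -> span_on f' -> span_on (fun z => f z + f' z).
Proof.
move=> [c fE] [c' f'E]; exists (fun x => c x + c' x) => z Dz.
by rewrite fE // f'E // -big_split; apply: eq_bigr => x _; rewrite scalerDl.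
Qed.

Lemma span_onZ (r : R) f : span_on f -> span_on (fun z => r *: f z).
Proof.
move=> [c fE]; exists (fun x => r * c x) => z Dz.
by rewrite fE // scaler_sumr; apply: eq_bigr => x _; rewrite scalerA.
Qed.

Lemma span_on_sum (I : Type) (r : seq I) (F : I -> X -> 'rV[R]_2) :
  (forall i, span_on (F i)) -> span_on (fun z => \sum_(i <- r) F i z).
Proof.
move=> spanF; elim: r => [|i r IHr].
  by apply: span_on_ext span_on0 => z _; rewrite big_nil.
by apply: span_on_ext (span_onD (spanF i) IHr) => z _; rewrite big_cons.
Qed.

Lemma span_on_gen x : span_on (g x).
Proof.
exists (fun y => (y == x)%:R) => z _.
by rewrite (bigD1 x) //= eqxx scale1r big1 ?addr0 // => y /negbTE->; rewrite scale0r.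
Qed.

Lemma has_dim_on_basis (S : (X -> 'rV[R]_2) -> Prop) :
  (forall x, S (g x)) -> free_on -> (forall f, S f -> span_on f) ->
  has_dim_on D S #|T|.
Proof.
move=> Sg free span; exists (fun i => g (enum_val i)); split => [i|]; first exact: Sg.
split=> [c c_eq0 i|f /span [c fE]].
  rewrite -[i]enum_valK; apply: (free (fun x => c (enum_rank x))) => z Dz.
  rewrite -[RHS](c_eq0 z Dz) (@big_enum_val _ _ _ T predT) /=.
  by under eq_bigr do rewrite enum_valK.
by exists (fun i => c (enum_val i)) => z Dz; rewrite fE // (@big_enum_val _ _ _ T predT).
Qed.

End Bases.

Arguments span_on0 {R X D T g}.
Arguments span_on_gen {R X D T g}.

Section Bivariate.
Variable R : realFieldType.
Implicit Types (p q : {poly {poly R}}) (s t : R).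

Lemma coef_dx p i j : (dx p)`_j`_i = p`_j`_i.+1 *+ i.+1.
Proof. by rewrite /dx coef_map_id0 ?deriv0 // coef_deriv. Qed.

Lemma coef_dy p i j : (dy p)`_j`_i = p`_j.+1`_i *+ j.+1.
Proof. by rewrite /dy coef_deriv coefMn. Qed.

Lemma dx_dy p : dx (dy p) = dy (dx p).
Proof. by apply/polyP => j; apply/polyP => i; rewrite !(coef_dx, coef_dy) mulrnAC. Qed.

Lemma QkP K p : Qk K p <-> forall i j, (K < i)%N || (K < j)%N -> p`_j`_i = 0.
Proof.
split=> [[size_p size_pj] i j /orP[lt_Ki|lt_Kj]|p_eq0].
- by rewrite nth_default // (leq_trans (size_pj j) lt_Ki).
- by rewrite (nth_default _ (leq_trans size_p lt_Kj)) coef0.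
split=> [|j]; apply/leq_sizeP => l lt_Kl.
  by apply/polyP => i; rewrite coef0 p_eq0 // lt_Kl orbT.
by rewrite p_eq0 // lt_Kl.
Qed.

Lemma ev2E n p s t : (size p <= n)%N -> ev2 p s t = \sum_(j < n) (p`_j).[s] * t ^+ j.
Proof.
move=> size_p; rewrite /ev2 (horner_coef_wide _ size_p) horner_sum.
by apply: eq_bigr => j _; rewrite hornerM horner_exp !hornerC.
Qed.


Lemma ev2_expand (m n : nat) p s t :
  (size p <= m)%N -> (forall j, (size (p`_j)%R <= n)%N) ->
  ev2 p s t = \sum_(j < m) \sum_(i < n) p`_j`_i * s ^+ i * t ^+ j.
Proof.
move=> size_p size_pj; rewrite (ev2E _ _ size_p); apply: eq_bigr => j _.
by rewrite (horner_coef_wide _ (size_pj j)) mulr_suml.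
Qed.
Definition mono_dx (i j : nat) s t : R := i%:R * s ^+ i.-1 * t ^+ j.
Definition mono_dy (i j : nat) s t : R := j%:R * s ^+ i * t ^+ j.-1.

Lemma ev2_dx_expand K p s t : Qk K.+1 p ->
  ev2 (dx p) s t = \sum_(j < K.+2) \sum_(i < K.+2) p`_j`_i * mono_dx i j s t.
Proof.
move=> /QkP p_eq0; rewrite (@ev2_expand K.+2 K.+1) => [||j].
- apply: eq_bigr => j _; rewrite [RHS]big_ord_recl /mono_dx /= !mul0r mulr0 add0r.
  by apply: eq_bigr => i _; rewrite coef_dx /= /bump /= add1n add0n -mulr_natr; ring.
- apply/leq_sizeP => j lt_j; apply/polyP => i.
  by rewrite coef_dx p_eq0 ?mul0rn ?coef0 // lt_j orbT.
- by apply/leq_sizeP => i lt_i; rewrite coef_dx p_eq0 ?mul0rn // ltnS lt_i.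
Qed.

Lemma ev2_dy_expand K p s t : Qk K.+1 p ->
  ev2 (dy p) s t = \sum_(j < K.+2) \sum_(i < K.+2) p`_j`_i * mono_dy i j s t.
Proof.
move=> /QkP p_eq0; rewrite (@ev2_expand K.+1 K.+2) => [||j].
- rewrite [RHS]big_ord_recl [X in _ = X + _]big1 ?add0r => [|i _]; last first.
    by rewrite /mono_dy /= !mul0r mulr0.
  apply: eq_bigr => j _; apply: eq_bigr => i _.
  by rewrite coef_dy /mono_dy /= /bump /= add1n -mulr_natr; ring.
- apply/leq_sizeP => j lt_j; apply/polyP => i.
  by rewrite coef_dy p_eq0 ?mul0rn ?coef0 // ltnS lt_j orbT.
- by apply/leq_sizeP => i lt_i; rewrite coef_dy p_eq0 ?mul0rn // lt_i.
Qed.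

Lemma grad_eq0_const p : dx p = 0 -> dy p = 0 -> p = (p`_0`_0)%:P%:P.
Proof.
move=> dx_p dy_p; apply/polyP => j; apply/polyP => i; rewrite coefC.
case: j => [|j] /=; last first.
  have /eqP := congr1 (fun q => q`_j`_i) dy_p.
  by rewrite coef_dy !coef0 mulrn_eq0 /= => /eqP->.
rewrite coefC; case: i => [//|i]; have /eqP := congr1 (fun q => q`_0`_i) dx_p.
by rewrite coef_dx !coef0 mulrn_eq0 /= => /eqP->.
Qed.

Lemma Qk_potential K p q : Qk K p -> Qk K q -> dx q = dy p ->
  exists f, [/\ Qk K.+1 f, dx f = p & dy f = q].
Proof.
move=> /QkP p_eq0 /QkP q_eq0 curl0.
have curl_coef i j : q`_j`_i.+1 *+ i.+1 = p`_j.+1`_i *+ j.+1.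
  by rewrite -coef_dx -coef_dy curl0.
(* Integrate [p] in [x]; the monomials free of [x] come from integrating [q] in [y]. *)
pose c i j : R := if i is i'.+1 then p`_j`_i' / i%:R
                  else if j is j'.+1 then q`_j'`_0 / j%:R else 0.
exists (\poly_(j < K.+2) \poly_(i < K.+2) c i j); split.
- apply/QkP => i j lt_K; rewrite !coef_poly.
  by case: ltnP => lt_j; rewrite ?coef_poly ?coef0 //; case: ltnP => // lt_i; lia.
- apply/polyP => j; apply/polyP => i; rewrite coef_dx !coef_poly.
  case: ltnP => lt_j; last by rewrite coef0 mul0rn p_eq0 //; lia.
  rewrite coef_poly; case: ltnP => lt_i; last by rewrite mul0rn p_eq0 //; lia.
  by rewrite -mulr_natr /c divfK // pnatr_eq0.
- apply/polyP => j; apply/polyP => i; rewrite coef_dy !coef_poly.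
  case: ltnP => lt_j; last by rewrite coef0 mul0rn q_eq0 //; lia.
  rewrite coef_poly; case: ltnP => lt_i; last by rewrite mul0rn q_eq0 //; lia.
  rewrite -mulr_natr /c; case: i {lt_i} => [|i]; first by rewrite divfK // pnatr_eq0.
  by rewrite mulrAC mulr_natr -curl_coef -[_ *+ i.+1]mulr_natr mulfK // pnatr_eq0.
Qed.

Definition shiftX (a : R) p : {poly {poly R}} := map_poly (comp_poly ('X + a%:P)) p.
Definition shiftY (b : R) p : {poly {poly R}} := p \Po ('X + (b%:P)%:P).
Definition shift (a b : R) p : {poly {poly R}} := shiftY b (shiftX a p).

Lemma size_map_poly_leq (f : {additive {poly R} -> {poly R}}) p :
  (size (map_poly f p) <= size p)%N.
Proof. by apply/leq_sizeP => j le_j; rewrite coef_map nth_default ?raddf0. Qed.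

Lemma ev2_shiftX a p s t : ev2 (shiftX a p) s t = ev2 p (s + a) t.
Proof.
rewrite (ev2E _ _ (size_map_poly_leq _ p)) (ev2E _ _ (leqnn _)).
by apply: eq_bigr => j _; rewrite coef_map /= horner_comp hornerD hornerX hornerC.
Qed.

Lemma ev2_shiftY b p s t : ev2 (shiftY b p) s t = ev2 p s (t + b).
Proof. by rewrite /ev2 /shiftY horner_comp hornerD hornerX hornerC polyCD. Qed.

Lemma ev2_shift a b p s t : ev2 (shift a b p) s t = ev2 p (s + a) (t + b).
Proof. by rewrite ev2_shiftY ev2_shiftX. Qed.

Lemma coef_shiftY n b p j : (size p <= n)%N ->
  (shiftY b p)`_j = \sum_(i < n) p`_i * ((('X + b%:P) ^+ i)`_j)%:P.
Proof.
move=> size_p; rewrite /shiftY /comp_poly (horner_coef_wide _ (_ : size p^:P <= n)%N).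
  have -> : 'X + (b%:P)%:P = ('X + b%:P)^:P by rewrite rmorphD /= map_polyX map_polyC.
  by rewrite coef_sum; apply: eq_bigr => i _; rewrite coef_map /= coefCM -rmorphXn coef_map.
by rewrite size_map_polyC.
Qed.

Lemma Qk_shiftX K a p : Qk K p -> Qk K (shiftX a p).
Proof.
case=> size_p size_pj; split; first exact: leq_trans (size_map_poly_leq _ p) size_p.
by move=> j; rewrite coef_map /= size_comp_poly2 ?size_XaddC.
Qed.

Lemma Qk_shiftY K b p : Qk K p -> Qk K (shiftY b p).
Proof.
case=> size_p size_pj; split=> [|j]; first by rewrite size_comp_poly2 ?size_XaddC.
rewrite (coef_shiftY _ _ (leqnn _)); apply: leq_trans (size_sum _ _ _) _.
apply/bigmax_leqP => i _; apply: leq_trans (size_polyMleq _ _) _.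
by have := size_polyC_leq1 ((('X + b%:P) ^+ i)`_j); have := size_pj i; lia.
Qed.

Lemma Qk_shift K a b p : Qk K p -> Qk K (shift a b p).
Proof. by move=> Qp; apply/Qk_shiftY/Qk_shiftX. Qed.

Lemma dx_shiftX a p : dx (shiftX a p) = shiftX a (dx p).
Proof.
apply/polyP => j; rewrite /dx /shiftX !coef_map /=.
by rewrite deriv_comp derivD derivX derivC addr0 mulr1.
Qed.

Lemma dy_shiftX a p : dy (shiftX a p) = shiftX a (dy p).
Proof. exact: deriv_map. Qed.

Lemma dx_shiftY b p : dx (shiftY b p) = shiftY b (dx p).
Proof.
apply/polyP => j; rewrite /dx coef_map /= !(coef_shiftY _ _ (size_map_poly_leq _ p)).
rewrite (coef_shiftY _ _ (leqnn _)) raddf_sum; apply: eq_bigr => i _.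
by rewrite coef_map /= derivM derivC mulr0 addr0.
Qed.

Lemma dy_shiftY b p : dy (shiftY b p) = shiftY b (dy p).
Proof. by rewrite /dy /shiftY deriv_comp derivD derivX derivC addr0 mulr1. Qed.

Lemma dx_shift a b p : dx (shift a b p) = shift a b (dx p).
Proof. by rewrite dx_shiftY dx_shiftX. Qed.

Lemma dy_shift a b p : dy (shift a b p) = shift a b (dy p).
Proof. by rewrite dy_shiftY dy_shiftX. Qed.

Definition mono (i j : nat) : {poly {poly R}} := ('X^i)%:P * 'X^j.

Lemma coef_mono i j i' j' : (mono i j)`_j'`_i' = ((i' == i) && (j' == j))%:R.
Proof.
rewrite /mono coefCM coefXn; case: eqP => _; last by rewrite mulr0 coef0 andbF.
by rewrite mulr1 coefXn andbT.
Qed.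

Lemma ev2_dx_mono i j s t : ev2 (dx (mono i j)) s t = mono_dx i j s t.
Proof.
have -> : dx (mono i j) = (('X^i)^`())%:P * 'X^j.
  apply/polyP => l; rewrite /dx coef_map /= /mono !coefCM coefXn.
  by case: eqP; rewrite ?mulr1 ?mulr0 ?deriv0.
by rewrite /ev2 /mono_dx derivXn !hornerE hornerMn hornerXn -mulr_natl.
Qed.

Lemma ev2_dy_mono i j s t : ev2 (dy (mono i j)) s t = mono_dy i j s t.
Proof.
rewrite /ev2 /mono_dy /dy /mono deriv_mulC derivXn !hornerE !hornerMn hornerXn !hornerE.
by rewrite -mulr_natl mulrCA mulrA.
Qed.

Lemma Qk_dx_monoP K i j : Qk K (dx (mono i j)) <-> (i = 0 \/ i <= K.+1 /\ j <= K)%N.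
Proof.
rewrite QkP; split=> [Q|adm i' j' lt_K].
  case: i Q => [|i] Q; [by left | right].
  case: (boolP ((K < i) || (K < j))%N) => [/Q/eqP|]; last lia.
  by rewrite coef_dx coef_mono !eqxx pnatr_eq0.
rewrite coef_dx coef_mono; case: eqP => [Ei|_]; case: eqP => [Ej|_] /=; rewrite ?mul0rn //.
exfalso; lia.
Qed.

Lemma Qk_dy_monoP K i j : Qk K (dy (mono i j)) <-> (j = 0 \/ i <= K /\ j <= K.+1)%N.
Proof.
rewrite QkP; split=> [Q|adm i' j' lt_K].
  case: j Q => [|j] Q; [by left | right].
  case: (boolP ((K < i) || (K < j))%N) => [/Q/eqP|]; last lia.
  by rewrite coef_dy coef_mono !eqxx pnatr_eq0.
rewrite coef_dy coef_mono; case: eqP => [Ei|_]; case: eqP => [Ej|_] /=; rewrite ?mul0rn //.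
exfalso; lia.
Qed.

Lemma Qk_dx_support K p i j : Qk K (dx p) -> p`_j`_i != 0 -> Qk K (dx (mono i j)).
Proof.
move=> /QkP dxp_eq0 pji_neq0; apply/Qk_dx_monoP.
case: i pji_neq0 => [|i] pji_neq0; [by left | right].
case: (boolP ((K < i) || (K < j))%N) => [/dxp_eq0/eqP|]; last lia.
by rewrite coef_dx mulrn_eq0 (negbTE pji_neq0).
Qed.

Lemma Qk_dy_support K p i j : Qk K (dy p) -> p`_j`_i != 0 -> Qk K (dy (mono i j)).
Proof.
move=> /QkP dyp_eq0 pji_neq0; apply/Qk_dy_monoP.
case: j pji_neq0 => [|j] pji_neq0; [by left | right].
case: (boolP ((K < i) || (K < j))%N) => [/dyp_eq0/eqP|]; last lia.
by rewrite coef_dy mulrn_eq0 (negbTE pji_neq0).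
Qed.

End Bivariate.

Section Square.
Variables (R : realFieldType) (a b h : R).
Hypothesis h_gt0 : 0 < h.
Local Notation D := (onbd a b h).

Definition edge_pt (e : 'I_4) (s : R) : bpt R :=
  (e, match nat_of_ord e with
      | 0 => (a + s, b) | 1 => (a + h, b + s) | 2 => (a + s, b + h) | _ => (a, b + s)
      end).

Lemma onbd_edge_pt e s : 0 <= s <= h -> D (edge_pt e s).
Proof.
by case: e => [[|[|[|[|//]]]] ?] s_in; rewrite /onbd /on_edge /=; split => //; lra.
Qed.

Lemma edge_coord_edge_pt e s :
  edge_coord e (edge_pt e s).2.1 (edge_pt e s).2.2 = (if odd e then b else a) + s.
Proof. by case: e => [[|[|[|[|//]]]] ?]. Qed.

Definition mbasis (k : nat) (x : 'I_4 * 'I_k.+1) (z : bpt R) : 'rV[R]_2 :=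
  ((z.1 == x.1)%:R * edge_coord z.1 z.2.1 z.2.2 ^+ x.2) *: ncross_s (normal R z.1) 1.

Lemma sum_mbasis k (c : 'I_4 * 'I_k.+1 -> R) z :
  \sum_x c x *: mbasis x z =
  (\sum_(j < k.+1) c (z.1, j) * edge_coord z.1 z.2.1 z.2.2 ^+ j) *: ncross_s (normal R z.1) 1.
Proof.
rewrite /mbasis; under eq_bigr do rewrite scalerA; rewrite -scaler_suml; congr (_ *: _).
set t := edge_coord _ _ _.
transitivity (\sum_e \sum_j c (e, j) * ((z.1 == e)%:R * t ^+ j)).
  by rewrite pair_bigA; apply: eq_bigr => -[].
rewrite (bigD1 z.1) //= [X in _ + X]big1 ?addr0 => [|e ne].
  by apply: eq_bigr => j _; rewrite eqxx mul1r.
by rewrite big1 // => j _; rewrite eq_sym (negbTE ne) mul0r mulr0.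
Qed.

Lemma Mspace_mbasis k x : Mspace k (@mbasis k x).
Proof.
exists (fun e => (e == x.1)%:R *: 'X^(x.2)); split=> [e|z].
  by rewrite (leq_trans (size_scale_leq _ _)) // size_polyXn.
by rewrite /mbasis [RHS]ncross_sE hornerZ hornerXn.
Qed.

Lemma mbasis_free k : free_on D (@mbasis k).
Proof.
move=> c c_eq0 [e j]; set base := if odd e then b else a.
apply: (@coef_eq0_on_interval _ base h _ (fun j => c (e, j))) => // x x_in.
have s_in : 0 <= x - base <= h by lra.
have /eqP := c_eq0 _ (onbd_edge_pt e s_in).
rewrite sum_mbasis edge_coord_edge_pt scaler_eq0 (negbTE (ncross_normal_neq0 _ _)) orbF.
by rewrite [base + _]addrC subrK => /eqP.
Qed.

Lemma mbasis_span k f : Mspace k f -> span_on D (@mbasis k) f.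
Proof.
move=> [p [size_p fE]]; exists (fun x : 'I_4 * 'I_k.+1 => (p x.1)`_x.2) => z _.
by rewrite sum_mbasis fE ncross_sE (horner_coef_wide _ (size_p z.1)).
Qed.

Lemma dim_Mspace k : has_dim_on D (Mspace k) (4 * k.+1).
Proof.
have <- : #|{: 'I_4 * 'I_k.+1}| = (4 * k.+1)%N by rewrite card_prod !card_ord.
exact: has_dim_on_basis (@Mspace_mbasis k) (@mbasis_free k) (@mbasis_span k).
Qed.

Definition vbasis (_ : 'I_1) (z : bpt R) : 'rV[R]_2 := ncross_s (normal R z.1) 1.

Lemma dim_Vtraces k : has_dim_on D (Vtraces k) 1.
Proof.
rewrite -[1%N]card_ord; apply: (@has_dim_on_basis _ _ _ _ vbasis) => [i|c c_eq0 i|f].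
- exists 1; split; last split; last split.
  + split=> [|j]; first by rewrite size_poly1.
    by rewrite coef1; case: (j == 0%N); rewrite ?size_poly1 ?size_poly0.
  + by rewrite /dy -polyC1 derivC.
  + by rewrite /dx -!polyC1 map_polyC /= derivC.
  + by move=> z; rewrite /ev2 !hornerC ncross_sE scale1r.
- have z_in : D (edge_pt ord0 0) by apply: onbd_edge_pt; rewrite lexx ltW.
  have /eqP := c_eq0 _ z_in.
  by rewrite big_ord1 scaler_eq0 (negbTE (ncross_normal_neq0 _ _)) orbF (ord1 i) => /eqP.
- move=> [v [_ [dy_v [dx_v fE]]]]; exists (fun=> v`_0`_0) => z _.
  by rewrite fE big_ord1 {1}(grad_eq0_const dx_v dy_v) /ev2 !hornerC ncross_sE.
Qed.

Lemma onbd_local z : D z ->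
  if odd z.1 then z.2.1 - a = 0 \/ z.2.1 - a = h else z.2.2 - b = 0 \/ z.2.2 - b = h.
Proof.
case: z => [[[|[|[|[|//]]]] ?] [x y]] [/= -> _]; rewrite ?subrr; [left|right|right|left] => //.
all: by rewrite addrC addKr.
Qed.

Lemma mono_dx_reduce p q s t : t = 0 \/ t = h ->
  mono_dx p.+1 q.+1 s t =
  h ^+ q * mono_dx p.+1 1 s t + h ^+ p * mono_dx 1 q.+1 s t - h ^+ (p + q) * mono_dx 1 1 s t.
Proof. by rewrite /mono_dx /= => -[]->; rewrite ?expr0n /= ?exprS ?exprD; ring. Qed.

Lemma mono_dy_reduce p q s t : s = 0 \/ s = h ->
  mono_dy p.+1 q.+1 s t =
  h ^+ q * mono_dy p.+1 1 s t + h ^+ p * mono_dy 1 q.+1 s t - h ^+ (p + q) * mono_dy 1 1 s t.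
Proof. by rewrite /mono_dy /= => -[]->; rewrite ?expr0n /= ?exprS ?exprD; ring. Qed.

Definition grad_trace (i j : nat) (z : bpt R) : 'rV[R]_2 :=
  tangential z.1 (mono_dx i j (z.2.1 - a) (z.2.2 - b)) (mono_dy i j (z.2.1 - a) (z.2.2 - b)).

(* On dK, s^(p+1) t^(q+1) = h^q s^(p+1) t + h^p s t^(q+1) - h^(p+q) s t. *)
Lemma grad_trace_reduce p q z : D z ->
  grad_trace p.+1 q.+1 z =
  h ^+ q *: grad_trace p.+1 1 z + h ^+ p *: grad_trace 1 q.+1 z
  + (- h ^+ (p + q)) *: grad_trace 1 1 z.
Proof.
move=> /onbd_local; rewrite /grad_trace !tangentialZ !tangentialD !mulNr.
by rewrite /tangential; case: ifP => _ on_edge; [rewrite -mono_dy_reduce | rewrite -mono_dx_reduce].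
Qed.

Lemma grad_trace_sum (d : nat -> nat -> R) m n z :
  \sum_(j < m) \sum_(i < n) d i j *: grad_trace i j z =
  tangential z.1 (\sum_(j < m) \sum_(i < n) d i j * mono_dx i j (z.2.1 - a) (z.2.2 - b))
                 (\sum_(j < m) \sum_(i < n) d i j * mono_dy i j (z.2.1 - a) (z.2.2 - b)).
Proof.
rewrite -tangential_sum; apply: eq_bigr => j _.
by rewrite -tangential_sum; apply: eq_bigr => i _; apply: tangentialZ.
Qed.

Lemma Wtraces_grad_trace K i j :
  Qk K (dx (mono R i j)) -> Qk K (dy (mono R i j)) -> Wtraces K (grad_trace i j).
Proof.
move=> Qdx Qdy; pose f := shift (- a) (- b) (mono R i j).
exists (dx f), (dy f); split; last split; last split.
- by rewrite /f dx_shift; apply: Qk_shift.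
- by rewrite /f dy_shift; apply: Qk_shift.
- by rewrite dx_dy subrr.
- by move=> z; rewrite ntan_normal /f dx_shift dy_shift !ev2_shift ev2_dx_mono ev2_dy_mono.
Qed.

Section WBasis.
Variable k : nat.
Local Notation WI := (('I_k.+2 + 'I_k.+2) + ('I_k.+1 + 'I_k))%type.

Definition wexp (x : WI) : nat * nat :=
  match x with
  | inl (inl p) => (p.+1, 0) | inl (inr q) => (0, q.+1)
  | inr (inl p) => (p.+1, 1) | inr (inr q) => (1, q.+2)
  end.

Definition wbasis (x : WI) : bpt R -> 'rV[R]_2 := grad_trace (wexp x).1 (wexp x).2.

Lemma Wtraces_wbasis x : Wtraces k.+1 (wbasis x).
Proof.
by apply: Wtraces_grad_trace; [apply/Qk_dx_monoP | apply/Qk_dy_monoP];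
  case: x => [[]|[]] [m lt_m] /=; lia.
Qed.

Lemma sum_wbasis (c : WI -> R) z :
  \sum_x c x *: wbasis x z =
  tangential z.1 (\sum_x c x * mono_dx (wexp x).1 (wexp x).2 (z.2.1 - a) (z.2.2 - b))
                 (\sum_x c x * mono_dy (wexp x).1 (wexp x).2 (z.2.1 - a) (z.2.2 - b)).
Proof. by under eq_bigr do rewrite /wbasis /grad_trace tangentialZ; rewrite tangential_sum. Qed.

Lemma sum_wexp_dx (c : WI -> R) s t :
  \sum_x c x * mono_dx (wexp x).1 (wexp x).2 s t =
  \sum_(p < k.+2) c (inl (inl p)) * p.+1%:R * s ^+ p
  + \sum_(p < k.+1) c (inr (inl p)) * p.+1%:R * s ^+ p * t
  + \sum_(q < k) c (inr (inr q)) * t ^+ q.+2.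
Proof.
rewrite !big_sumType /= [\sum_(q < k.+2) c (inl (inr q)) * _]big1 => [|q _]; last first.
  by rewrite /mono_dx !mul0r mulr0.
rewrite addr0 addrA; congr (_ + _ + _); apply: eq_bigr => i _;
  by rewrite /mono_dx /= ?expr0 ?expr1 ?mulr1 ?mul1r ?mulrA.
Qed.

Lemma sum_wexp_dy (c : WI -> R) s t :
  \sum_x c x * mono_dy (wexp x).1 (wexp x).2 s t =
  \sum_(q < k.+2) c (inl (inr q)) * q.+1%:R * t ^+ q
  + \sum_(p < k.+1) c (inr (inl p)) * s ^+ p.+1
  + \sum_(q < k) c (inr (inr q)) * q.+2%:R * s * t ^+ q.+1.
Proof.
rewrite !big_sumType /= [\sum_(p < k.+2) c (inl (inl p)) * _]big1 => [|p _]; last first.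
  by rewrite /mono_dy !mul0r mulr0.
rewrite add0r addrA; congr (_ + _ + _); apply: eq_bigr => i _;
  by rewrite /mono_dy /= ?expr0 ?expr1 ?mulr1 ?mul1r ?mulrA.
Qed.

Section Freeness.
Variable c : WI -> R.
Hypothesis c_eq0 : forall z, D z -> \sum_x c x *: wbasis x z = 0.

Lemma wtrace_dx_eq0 (e : 'I_4) s : ~~ odd e -> 0 <= s <= h ->
  \sum_x c x * mono_dx (wexp x).1 (wexp x).2 ((edge_pt e s).2.1 - a) ((edge_pt e s).2.2 - b) = 0.
Proof.
move=> even_e /(onbd_edge_pt e)/c_eq0; rewrite sum_wbasis => /tangential_eq0.
by rewrite (negbTE even_e).
Qed.

Lemma wtrace_dy_eq0 (e : 'I_4) s : odd e -> 0 <= s <= h ->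
  \sum_x c x * mono_dy (wexp x).1 (wexp x).2 ((edge_pt e s).2.1 - a) ((edge_pt e s).2.2 - b) = 0.
Proof.
by move=> odd_e /(onbd_edge_pt e)/c_eq0; rewrite sum_wbasis => /tangential_eq0; rewrite odd_e.
Qed.

Lemma wcoef_bottom_eq0 p : c (inl (inl p)) = 0.
Proof.
have /(_ p)/eqP : forall p, c (inl (inl p)) * p.+1%:R = 0.
  apply: (@coef_eq0_on_interval _ 0 h) => // s; rewrite add0r => s_in.
  have := wtrace_dx_eq0 (e := ord0) isT s_in.
  rewrite /= [a + s - a]addrC addKr subrr sum_wexp_dx.
  rewrite [\sum_(i < k.+1) _]big1 ?[\sum_(i < k) _]big1 ?addr0 // => i _.
    by rewrite expr0n mulr0.
  by rewrite mulr0.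
by rewrite mulf_eq0 pnatr_eq0 orbF => /eqP.
Qed.

Lemma wcoef_left_eq0 q : c (inl (inr q)) = 0.
Proof.
have /(_ q)/eqP : forall q, c (inl (inr q)) * q.+1%:R = 0.
  apply: (@coef_eq0_on_interval _ 0 h) => // s; rewrite add0r => s_in.
  have := wtrace_dy_eq0 (e := Ordinal (isT : 3 < 4)%N) isT s_in.
  rewrite /= [b + s - b]addrC addKr subrr sum_wexp_dy.
  rewrite [\sum_(i < k.+1) _]big1 ?[\sum_(i < k) _]big1 ?addr0 // => i _.
    by rewrite mulr0 mul0r.
  by rewrite expr0n mulr0.
by rewrite mulf_eq0 pnatr_eq0 orbF => /eqP.
Qed.

Lemma wcoef_right_eq0 q : c (inr (inr q)) = 0.
Proof.
(* The trace on the right edge as a polynomial in [t]; its constant term comes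
   from the potentials s^(p+1) t. *)
pose g (i : 'I_k.+1) : R := if unlift ord0 i is Some q then c (inr (inr q)) * q.+2%:R * h
                           else \sum_(p < k.+1) c (inr (inl p)) * h ^+ p.+1.
have /(_ (lift ord0 q))/eqP : forall i, g i = 0.
  apply: (@coef_eq0_on_interval _ 0 h) => // s; rewrite add0r => s_in.
  have := wtrace_dy_eq0 (e := Ordinal (isT : 1 < 4)%N) isT s_in.
  rewrite /= [a + h - a]addrC addKr [b + s - b]addrC addKr sum_wexp_dy.
  rewrite [\sum_(i < k.+2) _]big1 ?add0r => [sum_eq0|i _]; last by rewrite wcoef_left_eq0 !mul0r.
  rewrite -[X in _ = X]sum_eq0 big_ord_recl /g unlift_none expr0 mulr1; congr (_ + _).
  by apply: eq_bigr => i _; rewrite liftK lift0.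
by rewrite /g liftK !mulf_eq0 pnatr_eq0 (gt_eqF h_gt0) !orbF => /eqP.
Qed.

Lemma wcoef_top_eq0 p : c (inr (inl p)) = 0.
Proof.
have /(_ p)/eqP : forall p, c (inr (inl p)) * p.+1%:R * h = 0.
  apply: (@coef_eq0_on_interval _ 0 h) => // s; rewrite add0r => s_in.
  have := wtrace_dx_eq0 (e := Ordinal (isT : 2 < 4)%N) isT s_in.
  rewrite /= [a + s - a]addrC addKr [b + h - b]addrC addKr sum_wexp_dx.
  rewrite [\sum_(i < k.+2) _]big1 ?[\sum_(i < k) _]big1 ?add0r ?addr0 => [sum_eq0|i _|i _].
  - by rewrite -[X in _ = X]sum_eq0; apply: eq_bigr => i _; rewrite mulrAC.
  - by rewrite wcoef_right_eq0 mul0r.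
  - by rewrite wcoef_bottom_eq0 !mul0r.
by rewrite !mulf_eq0 pnatr_eq0 (gt_eqF h_gt0) !orbF => /eqP.
Qed.

End Freeness.

Lemma wbasis_free : free_on D wbasis.
Proof.
move=> c c_eq0 [[p|q]|[p|q]];
  [exact: wcoef_bottom_eq0 | exact: wcoef_left_eq0 | exact: wcoef_top_eq0 | exact: wcoef_right_eq0].
Qed.

Lemma wspan_grad_trace i j :
  Qk k.+1 (dx (mono R i j)) -> Qk k.+1 (dy (mono R i j)) -> span_on D wbasis (grad_trace i j).
Proof.
move=> /Qk_dx_monoP dx_adm /Qk_dy_monoP dy_adm.
have C_span p : (p < k.+1)%N -> span_on D wbasis (grad_trace p.+1 1).
  by move=> lt_p; apply: (span_on_gen (inr (inl (Ordinal lt_p)))).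
case: i j dx_adm dy_adm => [|p] [|q] dx_adm dy_adm.
- apply: span_on_ext span_on0 => z _.
  by rewrite /grad_trace /mono_dx /mono_dy !mul0r /tangential; case: ifP => _;
    apply/eqP; rewrite vec2_eq0 eqxx.
- have lt_q : (q < k.+2)%N by lia.
  exact: (span_on_gen (inl (inr (Ordinal lt_q)))).
- have lt_p : (p < k.+2)%N by lia.
  exact: (span_on_gen (inl (inl (Ordinal lt_p)))).
apply: (span_on_ext (fun z => @grad_trace_reduce p q z)).
apply: span_onD; [apply: span_onD|]; apply: span_onZ; last exact: C_span.
  by apply: C_span; lia.
case: q dx_adm dy_adm => [|q] dx_adm dy_adm; first exact: C_span.
have lt_q : (q < k)%N by lia.
exact: (span_on_gen (inr (inr (Ordinal lt_q)))).
Qed.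

Lemma wbasis_span f : Wtraces k.+1 f -> span_on D wbasis f.
Proof.
move=> [w1 [w2 [Qw1 [Qw2 [curl0 fE]]]]].
have [phi [Qphi dx_phi dy_phi]] :
    exists phi, [/\ Qk k.+2 phi, dx phi = shift a b w1 & dy phi = shift a b w2].
  apply: Qk_potential; [exact: Qk_shift | exact: Qk_shift |].
  by rewrite dx_shift dy_shift; congr shift; apply/eqP; rewrite -subr_eq0 curl0.
pose grad_phi z := \sum_(j < k.+3) \sum_(i < k.+3) phi`_j`_i *: grad_trace i j z.
apply: (span_on_ext (f' := grad_phi)).
  move=> z _; rewrite fE ntan_normal /grad_phi (grad_trace_sum (fun i j => phi`_j`_i)).
  have ev2_shifted p : ev2 p z.2.1 z.2.2 = ev2 (shift a b p) (z.2.1 - a) (z.2.2 - b).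
    by rewrite ev2_shift !subrK.
  by rewrite !ev2_shifted -dx_phi -dy_phi (ev2_dx_expand _ _ Qphi) (ev2_dy_expand _ _ Qphi).
apply: span_on_sum => j; apply: span_on_sum => i.
have [->|phi_ji] := eqVneq phi`_j`_i 0.
  by apply: span_on_ext span_on0 => z _; rewrite scale0r.
apply/span_onZ/wspan_grad_trace.
  by apply: (Qk_dx_support (p := phi)) => //; rewrite dx_phi; apply: Qk_shift.
by apply: (Qk_dy_support (p := phi)) => //; rewrite dy_phi; apply: Qk_shift.
Qed.

Lemma dim_Wtraces : has_dim_on D (Wtraces k.+1) (k.+2 + k.+2 + (k.+1 + k)).
Proof.
have <- : #|{: WI}| = (k.+2 + k.+2 + (k.+1 + k))%N by rewrite !card_sum !card_ord.
exact: has_dim_on_basis Wtraces_wbasis wbasis_free wbasis_span.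
Qed.

End WBasis.

End Square.

Theorem lemma5p8 (R : realFieldType) (a b h : R) (k : nat) :
  0 < h -> (1 <= k)%N -> I_M_eq a b h k 2.
Proof.
move=> h_gt0; case: k => [//|k] _.
exists (4 * k.+2)%N, 1%N, (k.+2 + k.+2 + (k.+1 + k))%N; split; last split; last split.
- exact: dim_Mspace.
- exact: dim_Vtraces.
- exact: dim_Wtraces.
- lia.
Qed.
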